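(* Let $f: \mathbb{R}^n \to \mathbb{R}^n$ be a convex topical function. Then $\mathcal{G}(f)$ is identical to the syntactic graph $\mathcal{G}_s(f)$.
   Context: $f$ is topical if $f(x+h) = f(x)+h$ for all $h\in\mathbb{R}$ (scalar added to each coordinate) and $x\le y$ componentwise implies $f(x)\le f(y)$. $f$ is convex if each component $f_i$ is convex. $\mathcal{G}(f)$ is the directed graph on $\{1,\dots,n\}$ with an edge $i\to j$ iff $\lim_{u\to\infty} f_i(u e_{\{j\}}) = \infty$, $e_{\{j\}}$ being the $j$-th standard basis vector. $\mathcal{G}_s(f)$ is the directed graph on $\{1,\dots,n\}$ with an edge $i\to j$ iff $f_i$ depends on $x_j$, i.e. there is no $h: \mathbb{R}^{n-1}\to\mathbb{R}$ with $f_i(x) = h(x_1,\dots,x_{j-1},x_{j+1},\dots,x_n)$ for all $x$. *)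

From mathcomp Require Import all_boot all_order all_algebra.
From mathcomp Require Import all_classical all_reals all_analysis.
Set Implicit Arguments. Unset Strict Implicit. Unset Printing Implicit Defensive.
Import Order.TTheory GRing.Theory Num.Theory.
Import numFieldNormedType.Exports.
Local Open Scope classical_set_scope.
Local Open Scope ring_scope.

Definition vec (R : realType) (n : nat) := 'I_n -> R.

Definition topical (R : realType) (n : nat) (f : vec R n -> vec R n) : Prop :=
  (forall (x : vec R n) (h : R) (i : 'I_n), f (fun k => x k + h) i = f x i + h) /\
  (forall (x y : vec R n), (forall k, x k <= y k) -> forall i, f x i <= f y i).

Definition convex_map (R : realType) (n : nat) (f : vec R n -> vec R n) : Prop :=
  forall (i : 'I_n) (x y : vec R n) (t : R), 0 <= t <= 1 ->
    f (fun k => t * x k + (1 - t) * y k) i <= t * f x i + (1 - t) * f y i.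

Definition scaled_basis (R : realType) (n : nat) (j : 'I_n) (u : R) : vec R n :=
  fun k => if k == j then u else 0.

Definition G_edge (R : realType) (n : nat) (f : vec R n -> vec R n) (i j : 'I_n) : Prop :=
  (fun u : R => f (scaled_basis j u) i) @ +oo --> +oo.

(* edge i -> j of G_s(f): f_i depends on x_j, i.e. there is no function h
   of the remaining coordinates (x_k)_{k <> j} with f_i(x) = h((x_k)_{k<>j}). *)
Definition Gs_edge (R : realType) (n : nat) (f : vec R n -> vec R n) (i j : 'I_n) : Prop :=
  ~ exists h : ({k : 'I_n | k != j} -> R) -> R,
      forall x : vec R n, f x i = h (fun k => x (proj1_sig k)).

From mathcomp Require Import all_boot all_order all_algebra.
From mathcomp Require Import all_classical all_reals all_analysis.
From mathcomp Require Import ring lra.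
Import Order.TTheory GRing.Theory Num.Theory numFieldNormedType.Exports.
Local Open Scope classical_set_scope.
Local Open Scope ring_scope.

(* If f_i ignores x_j, then u |-> f_i(u e_j) is constant and cannot diverge.
   Conversely, if it does not diverge, it is bounded above, being monotone.
   Topicality transfers this bound to every slice u |-> f_i(x[j := u]), up to
   the additive constant max_k |x_k|; a convex function on the whole line
   which is bounded above is constant, so f_i ignores x_j. *)

Lemma convex_bounded_above_const (R : realFieldType) (h : R -> R) (B : R) :
  (forall a b t, 0 <= t <= 1 -> h (t * a + (1 - t) * b) <= t * h a + (1 - t) * h b) ->
  (forall u, h u <= B) -> forall a b, h a = h b.
Proof.
move=> hconv hB.
suff hle : forall a b, h b <= h a by move=> a b; apply/le_anti; rewrite !hle.
move=> a b; rewrite leNgt; apply/negP => hab.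
pose d := h b - h a; pose K := B - h a.
have d_gt0 : 0 < d by rewrite subr_gt0.
have dK : d <= K by have := hB b; rewrite /d /K; lra.
(* Extrapolate the chord from a through b to y, with b = s y + (1 - s) a. *)
pose s := d / (2 * K); pose y := a + (b - a) / s.
have s_gt0 : 0 < s by rewrite divr_gt0 //; lra.
have s_le1 : s <= 1 by rewrite ler_pdivrMr; lra.
have sK : s * K = d / 2 by rewrite /s; field; lra.
have eb : s * y + (1 - s) * a = b by rewrite /y; field; lra.
have hb : h b <= s * h y + (1 - s) * h a.
  by rewrite -[in h b]eb; apply: hconv; rewrite (ltW s_gt0) s_le1.
have hyB : s * h y <= s * B by rewrite ler_pM2l // hB.
have : d <= s * K by rewrite /d /K; lra.
rewrite sK; lra.
Qed.

Lemma nondecreasing_unbounded_cvgry (R : realType) (g : R -> R) :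
  {homo g : x y / x <= y} -> (forall A, exists u, A < g u) -> g @ +oo --> +oo.
Proof.
move=> gnd gunb; apply/cvgryPge => A; have [u Au] := gunb A.
exists u; split; first exact: num_real.
by move=> x ux; apply: le_trans (ltW Au) (gnd _ _ (ltW ux)).
Qed.

Section TopicalMaps.
Variables (R : realType) (n : nat).
Implicit Types (f : vec R n -> vec R n) (x y : vec R n).

Definition set_coord x (j : 'I_n) (u : R) : vec R n :=
  fun k => if k == j then u else x k.

Definition ignores_coord (g : vec R n -> R) (j : 'I_n) :=
  forall x u, g (set_coord x j u) = g x.

Lemma Gs_edgeNP f i j : ~ Gs_edge f i j <-> ignores_coord (fun x => f x i) j.
Proof.
split.
- move=> /contrapT [h fh] x u; rewrite !fh; congr h; apply: funext => -[k kj] /=.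
  by rewrite /set_coord (negbTE kj).
- move=> fign; apply; pose ext (z : {k | k != j} -> R) k := oapp z 0 (insub k).
  exists (fun z => f (ext z) i) => x; rewrite -(fign x 0); congr f.
  apply: funext => k; rewrite /ext /set_coord; case: insubP => [s kj /= ->|].
    by rewrite (negbTE kj).
  by rewrite negbK => ->.
Qed.

Lemma G_edge_not_ignores_coord f i j :
  G_edge f i j -> ~ ignores_coord (fun x => f x i) j.
Proof.
move=> /cvgryPge /(_ (f (fun=> 0) i + 1)) [M [_ fM]] fign.
have := fM (M + 1); rewrite ltrDl ltr01 => /(_ isT).
by rewrite [X in _ <= X](fign (fun=> 0)); lra.
Qed.

Lemma topical_le_shift f x y (c : R) :
  topical f -> (forall k, x k <= y k + c) -> forall i, f x i <= f y i + c.
Proof. by move=> [fhom fmon] xyc i; rewrite -fhom; apply: fmon. Qed.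

Lemma convex_map_set_coord f x i j a b t : convex_map f -> 0 <= t <= 1 ->
  f (set_coord x j (t * a + (1 - t) * b)) i <=
  t * f (set_coord x j a) i + (1 - t) * f (set_coord x j b) i.
Proof.
move=> fcvx t01.
have -> : set_coord x j (t * a + (1 - t) * b) =
    (fun k => t * set_coord x j a k + (1 - t) * set_coord x j b k).
  by apply: funext => k; rewrite /set_coord; case: ifP => // _; ring.
exact: fcvx.
Qed.

Lemma ignores_coord_of_not_G_edge f i j : topical f -> convex_map f ->
  ~ G_edge f i j -> ignores_coord (fun x => f x i) j.
Proof.
move=> ftop fcvx nG x u.
have [M gM] : exists M, forall v, f (scaled_basis j v) i <= M.
  apply: contrapT => unb; apply: nG; apply: nondecreasing_unbounded_cvgry.
    by move=> v w vw; apply: ftop.2 => k; rewrite /scaled_basis; case: ifP.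
  move=> A; apply: contrapT => noA; apply: unb; exists A => v.
  by rewrite leNgt; apply/negP => Av; apply: noA; exists v.
pose c := \sum_(k < n) `|x k|.
have c_ge : forall k, `|x k| <= c.
  by move=> k; rewrite /c (bigD1 k) //= lerDl sumr_ge0.
have xj : set_coord x j (x j) = x.
  by apply: funext => k; rewrite /set_coord; case: eqP => [->|].
rewrite -[in RHS]xj.
apply: (@convex_bounded_above_const _ (fun v => f (set_coord x j v) i) (M + c)).
  by move=> a b t; apply: convex_map_set_coord.
move=> v; apply: (@le_trans _ _ (f (scaled_basis j v) i + c)); last by rewrite lerD2r.
apply: topical_le_shift => // k.
rewrite /set_coord /scaled_basis; case: ifP => _.
  by rewrite lerDl (le_trans _ (c_ge j)).
by rewrite add0r (le_trans (ler_norm _)).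
Qed.

End TopicalMaps.

Theorem proposition3p3 (R : realType) (n : nat) (f : vec R n -> vec R n) :
  topical f -> convex_map f ->
  forall i j : 'I_n, G_edge f i j <-> Gs_edge f i j.
Proof.
move=> ftop fcvx i j; split.
- move=> fG; apply: contrapT => /(@Gs_edgeNP R n f i j).
  exact: G_edge_not_ignores_coord.
- move=> fGs; apply: contrapT => nG; apply: (@Gs_edgeNP R n f i j).2 fGs.
  exact: ignores_coord_of_not_G_edge.
Qed.
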